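(* Let $p$ be a prime, $n\ge1$, $s\ge0$ integers, and $f:\mathbb{F}_{p^n}\to\mathbb{F}_p$. Let $M=(m_{x,y})_{x,y\in\mathbb{F}_{p^n}}$ be the $p^n\times p^n$ matrix with $m_{x,y}=\zeta_p^{f(x+y)}$. Then $f$ is $s$-plateaued if and only if $MM^*M=p^{n+s}M$, where $M^*$ is the conjugate transpose of $M$.
   Context: $\zeta_p=e^{2\pi i/p}$, $Tr_n(z)=\sum_{i=0}^{n-1}z^{p^i}$. The Walsh transform is $\widehat f(\mu)=\sum_{x\in\mathbb{F}_{p^n}}\zeta_p^{f(x)-Tr_n(\mu x)}$. $f$ is $s$-plateaued if $|\widehat f(\mu)|\in\{0,p^{(n+s)/2}\}$ for all $\mu\in\mathbb{F}_{p^n}$. *)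

From HB Require Import structures.
From mathcomp Require Import all_boot all_order all_algebra all_field.
Set Implicit Arguments. Unset Strict Implicit. Unset Printing Implicit Defensive.
Import Order.TTheory GRing.Theory Num.Theory.
Local Open Scope ring_scope.

(* zeta_p = exp(2 pi i / p): p.-root (-1) is exp(i pi / p) (the root of -1 of
   minimal non-negative argument), so its square is exp(2 pi i / p). *)
Definition zeta (p : nat) : algC := (p.-root (-1)) ^+ 2.

Definition Tr (F : finFieldType) (p n : nat) (z : F) : F :=
  \sum_(i < n) z ^+ (p ^ i).

(* The natural number k < p with k%:R = a, for a in the prime subfield of F
   (default 0, never used for values of the trace). *)
Definition prime_val (F : finFieldType) (p : nat) (a : F) : nat :=
  if [pick i : 'I_p | (nat_of_ord i)%:R == a] is Some i then nat_of_ord i else 0%N.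

Definition walsh (F : finFieldType) (p n : nat) (f : F -> 'F_p) (mu : F) : algC :=
  \sum_(x : F)
     zeta p ^+ (nat_of_ord (f x - ((prime_val p (Tr p n (mu * x)))%:R : 'F_p))).

Definition plateaued (F : finFieldType) (p n s : nat) (f : F -> 'F_p) : Prop :=
  forall mu : F, `|walsh n f mu| = 0 \/ `|walsh n f mu| = sqrtC ((p ^ (n + s))%:R).

Definition Mf (F : finFieldType) (p : nat) (f : F -> 'F_p) : 'M[algC]_#|F| :=
  \matrix_(i, j) zeta p ^+ (nat_of_ord (f (enum_val i + enum_val j))).

Definition conjT (m : nat) (A : 'M[algC]_m) : 'M[algC]_m := (map_mx (fun z : algC => z^*) A)^T.

(* With chi = zeta_p^Tr the canonical additive character of F = F_{p^n}, the
   normalised character table U = |F|^(-1/2) (chi (x y))_(x,y) is unitary, and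
   Fourier inversion gives M = U D U with D the diagonal matrix of the Walsh
   values f^(mu).  Hence M M^* M = U (D D^* D) U, and since U is invertible the
   identity M M^* M = p^(n+s) M holds iff |f^(mu)|^2 f^(mu) = p^(n+s) f^(mu)
   for every mu, i.e. iff f is s-plateaued. *)

From HB Require Import structures.
From mathcomp Require Import all_boot all_order all_algebra all_field ring.
Set Implicit Arguments. Unset Strict Implicit. Unset Printing Implicit Defensive.
Import Order.TTheory GRing.Theory Num.Theory.
Local Open Scope ring_scope.

Lemma zeta_prim_root p : prime p -> p.-primitive_root (zeta p).
Proof.
move=> pr_p; have p_gt0 := prime_gt0 pr_p.
have root_p : p.-root (-1 : algC) ^+ p = -1 by rewrite rootCK.
have zeta_p : zeta p ^+ p = 1 by rewrite /zeta -exprM mulnC exprM root_p sqrrN expr1n.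
have [m m_prim m_dvd] := prim_order_exists p_gt0 zeta_p.
have [_ /(_ m m_dvd) /orP[/eqP m1|/eqP mp]] := primeP pr_p; last by move: m_prim; rewrite mp.
move: m_prim; rewrite m1 => /prim_expr_order; rewrite expr1 /zeta => /eqP.
rewrite sqrf_eq1 => /orP[/eqP root1|/eqP rootN1].
  by move: root_p; rewrite root1 expr1n => /eqP; rewrite -subr_eq0 opprK -mulr2n pnatr_eq0.
have : p.-root (-1 : algC) < 0 by rewrite rootN1 ltrN10.
by rewrite rootC_lt0 // prime_gt1.
Qed.

Lemma zeta_neq0 p : prime p -> zeta p != 0.
Proof. by move=> pr_p; rewrite (prim_root_eq0 (zeta_prim_root pr_p)) -lt0n prime_gt0. Qed.

Lemma conjC_unity_root (C : numClosedFieldType) k (z : C) :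
  (0 < k)%N -> k.-unity_root z -> z^* = z^-1.
Proof.
move=> k_gt0 /unity_rootP zk1.
have z_norm : `|z| = 1.
  by apply/eqP; rewrite -(pexpr_eq1 k_gt0) // -normrX zk1 normr1.
have z_neq0 : z != 0 by rewrite -normr_eq0 z_norm oner_eq0.
by apply: (mulfI z_neq0); rewrite -normCK z_norm expr1n divff.
Qed.

Lemma exists_nonroot (R : finIdomainType) (P : {poly R}) :
  P != 0 -> (size P <= #|R|)%N -> exists x, ~~ root P x.
Proof.
move=> P_neq0 sizeP; apply/existsP; rewrite -negb_forall; apply/negP => /forallP rootP.
suff : (#|R| < size P)%N by rewrite ltnNge sizeP.
rewrite cardE; apply: max_poly_roots P_neq0 _ (enum_uniq R).
by apply/allP => x _; apply: rootP.
Qed.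

Section PrimeField.
Variables (p : nat) (F : fieldType).
Hypothesis charFp : p \in [pchar F].

Let pr_p : prime p := pcharf_prime charFp.

Lemma natr_eq_mod i j : i%:R = j%:R :> F -> i = j %[mod p].
Proof.
wlog le_ij : i j / (i <= j)%N => [wlog_ij eq_ij|].
  case/orP: (leq_total i j) => [/wlog_ij|/wlog_ij]; first exact.
  by move=> /(_ (esym eq_ij)).
move/eqP; rewrite eq_sym -subr_eq0 -natrB // -(dvdn_pcharf charFp).
by rewrite -eqn_mod_dvd // => /eqP.
Qed.

Lemma natr_inj_ltn i j : (i < p)%N -> (j < p)%N -> i%:R = j%:R :> F -> i = j.
Proof. by move=> ip jp /natr_eq_mod; rewrite !modn_small. Qed.

Lemma frobenius_fixed_natr (t : F) : t ^+ p = t -> exists2 k, (k < p)%N & k%:R = t.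
Proof.
move=> tp; set s := [seq (k%:R : F) | k <- iota 0 p].
have [/mapP [k] | t_notin_s] := boolP (t \in s).
  by rewrite mem_iota add0n => /andP [_ kp] ->; exists k.
(* Otherwise X^p - X would have the p + 1 distinct roots t, 0, ..., p - 1. *)
pose P : {poly F} := 'X^p - 'X.
have sizeP : size P = p.+1.
  by rewrite /P size_polyDl size_polyXn // size_polyN size_polyX ltnS prime_gt1.
have P_neq0 : P != 0 by rewrite -size_poly_eq0 sizeP.
suff : (size (t :: s) < size P)%N by rewrite /= sizeP size_map size_iota ltnn.
apply: max_poly_roots P_neq0 _ _.
  rewrite /= /root /P !hornerE tp subrr eqxx /=; apply/allP => _ /mapP [k _ ->].
  by rewrite !hornerE -(pFrobenius_autE charFp) pFrobenius_aut_nat subrr.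
rewrite /= t_notin_s map_inj_in_uniq ?iota_uniq // => i j.
by rewrite !mem_iota !add0n => /andP[_ ip] /andP[_ jp]; apply: natr_inj_ltn.
Qed.

End PrimeField.

Lemma prime_valK (F : finFieldType) p (t : F) :
  p \in [pchar F] -> t ^+ p = t -> (prime_val p t)%:R = t.
Proof.
move=> charFp /(frobenius_fixed_natr charFp) [k kp kt]; rewrite /prime_val.
by case: pickP => [i /eqP //| /(_ (Ordinal kp)) /=]; rewrite kt eqxx.
Qed.

Lemma zeta_expB p (a : 'F_p) k : prime p ->
  zeta p ^+ nat_of_ord (a - k%:R) = zeta p ^+ nat_of_ord a / zeta p ^+ k.
Proof.
move=> pr_p; apply: (canRL (mulfK _)); first by rewrite expf_neq0 // zeta_neq0.
rewrite -exprD; apply/eqP; rewrite (eq_prim_root_expr (zeta_prim_root pr_p)).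
by apply/eqP/(natr_eq_mod (pchar_Fp pr_p)); rewrite natrD !natr_Zp subrK.
Qed.

Section UnitarySandwich.
Variables (C : numClosedFieldType) (m : nat).
Implicit Types (U V X Y : 'M[C]_m) (d : 'rV[C]_m).
Local Open Scope sesquilinear_scope.

Lemma adjmx_mul X Y : (X *m Y) ^t* = Y ^t* *m X ^t*.
Proof. by rewrite trmx_mul map_mxM. Qed.

Lemma unitary_sandwich_cube U V X :
  U \is unitarymx -> V \is unitarymx ->
  (U *m X *m V) *m (U *m X *m V) ^t* *m (U *m X *m V) = U *m (X *m X ^t* *m X) *m V.
Proof.
by move=> U_unitary V_unitary; rewrite !adjmx_mul !mulmxA mulmxtVK // mulmxKtV.
Qed.

Lemma unitary_sandwich_inj U V X Y :
  U \is unitarymx -> V \is unitarymx -> U *m X *m V = U *m Y *m V -> X = Y.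
Proof.
move=> /unitarymx_unit U_unit /unitarymx_unit V_unit /(congr1 (mulmx^~ (invmx V))).
by rewrite !(mulmxK V_unit) => /(congr1 (mulmx (invmx U))); rewrite !(mulKmx U_unit).
Qed.

Lemma diag_mx_inj : injective (@diag_mx C m).
Proof. by move=> d1 d2 /matrixP eq_d; apply/rowP => i; have := eq_d i i; rewrite !mxE eqxx. Qed.

Lemma diag_mx_cube d :
  diag_mx d *m (diag_mx d) ^t* *m diag_mx d = diag_mx (\row_i (d 0 i * (d 0 i)^* * d 0 i)).
Proof.
rewrite tr_diag_mx map_diag_mx !mulmx_diag; congr diag_mx.
by apply/rowP => i; rewrite !mxE.
Qed.

End UnitarySandwich.

Lemma sum_enum_val (T : finType) (V : nmodType) (g : T -> V) :
  \sum_(i < #|T|) g (enum_val i) = \sum_x g x.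
Proof. by rewrite (big_enum_val g). Qed.

Lemma plateau_value_iff (a c : algC) : 0 <= c ->
  (`|a| = 0 \/ `|a| = sqrtC c) <-> a * a^* * a = c * a.
Proof.
move=> c_ge0; rewrite -normCK; split.
  by case=> [/normr0_eq0 ->|->]; rewrite ?mulr0 ?sqrtCK.
have [->|a_neq0] := eqVneq a 0; first by left; rewrite normr0.
by move/(mulIf a_neq0) <-; right; rewrite sqrCK.
Qed.

Section AdditiveCharacter.
Variables (p n : nat) (F : finFieldType).
Hypotheses (pr_p : prime p) (n_gt0 : (0 < n)%N) (cardF : #|F| = (p ^ n)%N).

Let charFp : p \in [pchar F] := card_finPcharP cardF pr_p.

Lemma TrD (a b : F) : Tr p n (a + b) = Tr p n a + Tr p n b.
Proof.
rewrite /Tr -big_split /=; apply: eq_bigr => i _; apply: exprDn_pchar.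
by rewrite (eq_pnat _ (pcharf_eq charFp)) pnatX pnat_id.
Qed.

Lemma Tr_frobenius (z : F) : Tr p n z ^+ p = Tr p n z.
Proof.
have -> : Tr p n z ^+ p = \sum_(i < n) z ^+ (p ^ i.+1).
  rewrite /Tr -(pFrobenius_autE charFp) rmorph_sum; apply: eq_bigr => i _.
  by rewrite /= pFrobenius_autE expnSr exprM.
case: n n_gt0 cardF => // m _ cardF'.
rewrite /Tr big_ord_recr big_ord_recl /= addrC -cardF' expf_card expn0 expr1.
by congr (_ + _); apply: eq_bigr => i _.
Qed.

Lemma Tr_nontrivial : exists y : F, Tr p n y != 0.
Proof.
(* Tr is a nonzero polynomial function of degree p^(n-1) < #|F|. *)
case: n n_gt0 cardF => // m _ cardF'.
pose P : {poly F} := \sum_(i < m.+1) 'X^(p ^ i).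
have P_Tr y : P.[y] = Tr p m.+1 y.
  by rewrite /P horner_sum; apply: eq_bigr => i _; rewrite hornerXn.
have size_low : (size (\sum_(i < m) 'X^(p ^ i) : {poly F})%R <= p ^ m)%N.
  apply: leq_trans (size_sum _ _ _) _; apply/bigmax_leqP => i _.
  by rewrite size_polyXn ltn_exp2l ?prime_gt1.
have sizeP : size P = (p ^ m).+1.
  by rewrite /P big_ord_recr /= addrC size_polyDl size_polyXn // ltnS.
have P_neq0 : P != 0 by rewrite -size_poly_eq0 sizeP.
have sizeP_le : (size P <= #|F|)%N.
  by rewrite sizeP cardF' expnS ltn_Pmull ?prime_gt1 ?expn_gt0 ?prime_gt0.
by have [y] := exists_nonroot P_neq0 sizeP_le; rewrite /root P_Tr; exists y.
Qed.

Definition chi (z : F) : algC := zeta p ^+ prime_val p (Tr p n z).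

Lemma prime_val_TrK (z : F) : (prime_val p (Tr p n z))%:R = Tr p n z.
Proof. exact: prime_valK charFp (Tr_frobenius z). Qed.

Lemma chiD (a b : F) : chi (a + b) = chi a * chi b.
Proof.
rewrite /chi -exprD; apply/eqP; rewrite (eq_prim_root_expr (zeta_prim_root pr_p)).
by apply/eqP/(natr_eq_mod charFp); rewrite natrD !prime_val_TrK TrD.
Qed.

Lemma chi_unity_root (z : F) : p.-unity_root (chi z).
Proof.
by rewrite unity_rootE /chi -exprM mulnC exprM (prim_expr_order (zeta_prim_root pr_p)) expr1n.
Qed.

Lemma chi_neq0 (z : F) : chi z != 0.
Proof. by rewrite expf_neq0 // zeta_neq0. Qed.

Lemma chi0 : chi 0 = 1.
Proof. by apply: (mulIf (chi_neq0 0)); rewrite -chiD addr0 mul1r. Qed.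

Lemma chiN (z : F) : chi (- z) = (chi z)^*.
Proof.
rewrite (conjC_unity_root (prime_gt0 pr_p) (chi_unity_root z)).
by apply: (mulIf (chi_neq0 z)); rewrite -chiD addNr chi0 mulVf ?chi_neq0.
Qed.

Lemma chi_nontrivial : exists y : F, chi y != 1.
Proof.
have [y Try] := Tr_nontrivial; exists y.
by rewrite /chi -(prim_order_dvd (zeta_prim_root pr_p)) (dvdn_pcharf charFp) prime_val_TrK.
Qed.

Lemma sum_chi_mul (t : F) :
  \sum_(x : F) chi (t * x) = if t == 0 then #|F|%:R else 0.
Proof.
have [->|t_neq0] := eqVneq t 0.
  by rewrite (eq_bigr (fun _ => 1)) ?sumr_const // => x _; rewrite mul0r chi0.
have [y chi_y] := chi_nontrivial; set S := \sum_x _.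
have : S = chi y * S.
  rewrite /S mulr_sumr [in LHS](reindex_inj (addIr (t^-1 * y))) /=; apply: eq_bigr => x _.
  by rewrite mulrDr mulrA divff // mul1r chiD mulrC.
by move/eqP; rewrite -subr_eq0 -{1}[S]mul1r -mulrBl mulf_eq0 subr_eq0 eq_sym (negbTE chi_y) => /eqP.
Qed.

Lemma walsh_chiE (f : F -> 'F_p) (mu : F) :
  walsh n f mu = \sum_(x : F) zeta p ^+ nat_of_ord (f x) * chi (- (mu * x)).
Proof.
apply: eq_bigr => x _; rewrite zeta_expB // chiN.
by rewrite (conjC_unity_root (prime_gt0 pr_p) (chi_unity_root _)).
Qed.

Local Notation q := (#|F|%:R : algC).

Let q_neq0 : q != 0.
Proof. by rewrite pnatr_eq0 -lt0n cardF expn_gt0 prime_gt0. Qed.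

Definition char_mx : 'M[algC]_#|F| :=
  (sqrtC q)^-1 *: \matrix_(i, j) chi (enum_val i * enum_val j).

Lemma inv_sqrtC_card_sqr : (sqrtC q)^-1 * (sqrtC q)^-1 = q^-1.
Proof. by rewrite -invfM -expr2 sqrtCK. Qed.

Lemma char_mx_unitary : char_mx \is unitarymx.
Proof.
apply/unitarymxP/matrixP => i j; rewrite !mxE.
under eq_bigr do rewrite !mxE rmorphM /= -chiN mulrACA -chiD geC0_conj ?invr_ge0 ?sqrtC_ge0 ?ler0n //.
under eq_bigr do rewrite -mulrBl.
rewrite -mulr_sumr inv_sqrtC_card_sqr (sum_enum_val (fun mu => chi (_ * mu))) sum_chi_mul.
by rewrite subr_eq0 (inj_eq enum_val_inj); case: eqP => _; rewrite ?mulVf ?mulr0.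
Qed.

Definition walsh_row (f : F -> 'F_p) : 'rV[algC]_#|F| := \row_i walsh n f (enum_val i).

Lemma Mf_char_diag (f : F -> 'F_p) : Mf f = char_mx *m diag_mx (walsh_row f) *m char_mx.
Proof.
apply/matrixP => i j; rewrite mul_mx_diag !mxE.
set x := enum_val i; set y := enum_val j.
transitivity (q^-1 * \sum_(mu : F) \sum_(z : F) zeta p ^+ f z * chi ((x + y - z) * mu)); last first.
  rewrite -inv_sqrtC_card_sqr mulr_sumr -sum_enum_val; apply: eq_bigr => k _.
  rewrite !mxE walsh_chiE !mulr_sumr mulr_suml; apply: eq_bigr => z _.
  rewrite mulrBl mulrDl !chiD [y * _]mulrC [z * _]mulrC; ring.
rewrite exchange_big /=; under eq_bigr do rewrite -mulr_sumr sum_chi_mul subr_eq0 eq_sym.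
rewrite (bigD1 (x + y)) //= eqxx big1 => [|z /negbTE ->]; last by rewrite mulr0.
by rewrite addr0 mulrCA mulVf ?mulr1.
Qed.

End AdditiveCharacter.

Theorem mainTheorem7 (p n s : nat) (F : finFieldType) (f : F -> 'F_p) :
  prime p -> (0 < n)%N -> #|F| = (p ^ n)%N ->
  (plateaued n s f <->
   Mf f *m conjT (Mf f) *m Mf f = ((p ^ (n + s))%:R : algC) *: Mf f).
Proof.
move=> pr_p n_gt0 cardF; set c : algC := (p ^ (n + s))%:R.
have c_ge0 : 0 <= c by rewrite ler0n.
have U_unitary := char_mx_unitary pr_p n_gt0 cardF.
rewrite /conjT map_trmx (Mf_char_diag pr_p n_gt0 cardF) unitary_sandwich_cube // diag_mx_cube.
rewrite scalemxAl scalemxAr -linearZ /=.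
split=> [plat | /(unitary_sandwich_inj U_unitary U_unitary)/diag_mx_inj/rowP cube mu].
  by congr (_ *m diag_mx _ *m _); apply/rowP => i; rewrite !mxE; apply/plateau_value_iff.
by apply/(plateau_value_iff _ c_ge0); have := cube (enum_rank mu); rewrite !mxE enum_rankK.
Qed.
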